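(* Let $\|\cdot\|_{Lo}$ be the Lorentz norm on $\mathbb{R}^p$ ($p\ge2$) and let $S_\star\subset\{1,\dots,p\}$ with $p\in S_\star$. Then for all $\beta\in\mathbb{R}^p$, $$\|\beta_{S_\star^{c}}\|_{Lo}\le\tfrac32\,\Omega^{S_\star^{c}}(\beta_{S_\star^{c}}),$$ i.e. the constant $C_{S_\star}$ can be taken equal to $3/2$.
   Context: The Lorentz cone is $\mathcal{A}:=\{a\in\mathbb{R}^p: a_j>0\ \forall j,\ a_p\ge\|(a_1,\dots,a_{p-1})\|_2\}$ and $\|\beta\|_{Lo}:=\inf_{a\in\mathcal{A}}\frac12\sum_{i=1}^p\big(\beta_i^2/a_i+a_i\big)$. For $S\ni p$, $\beta_{S^c}$ is the vector in $\mathbb{R}^p$ with entries $\beta_j1\{j\notin S\}$, $\mathcal{A}_{S^c}:=\{(a_j)_{j\in S^c}:a\in\mathcal{A}\}$, and $\Omega^{S^c}(\beta_{S^c}):=\inf_{a\in\mathcal{A}_{S^c}}\frac12\sum_{j\in S^c}\big(\beta_j^2/a_j+a_j\big)$. *)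

(* R : realType, vectors in R^p as functions 'I_p -> R.
   Coordinates are indexed 0..p-1; the paper's coordinate p is the index p.-1. *)
From HB Require Import structures.
From mathcomp Require Import all_boot all_order all_algebra.
From mathcomp Require Import all_classical all_reals.
Set Implicit Arguments. Unset Strict Implicit. Unset Printing Implicit Defensive.
Import Order.TTheory GRing.Theory Num.Theory.
Local Open Scope classical_set_scope.
Local Open Scope ring_scope.

Definition is_last (p : nat) (j : 'I_p) : bool := (val j == p.-1)%N.

Definition lorentz_cone (R : realType) (p : nat) : set ('I_p -> R) :=
  [set a | (forall j, 0 < a j) /\
           (forall j, is_last j ->
              Num.sqrt (\sum_(i < p | ~~ is_last i) a i ^+ 2) <= a j)].

Definition lorentz_norm (R : realType) (p : nat) (beta : 'I_p -> R) : R :=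
  inf [set (2^-1 * \sum_(i < p) (beta i ^+ 2 / a i + a i)) | a in @lorentz_cone R p].

Definition restrict_compl (R : realType) (p : nat) (S : {set 'I_p})
  (beta : 'I_p -> R) : 'I_p -> R := fun j => if j \in S then 0 else beta j.

(* A_{S^c} = {(a_j)_{j in S^c} : a in A}; an element is represented by any
   function b : 'I_p -> R agreeing with some a in A on S^c (values on S are
   irrelevant, since Omega only uses the S^c coordinates). *)
Definition cone_proj (R : realType) (p : nat) (S : {set 'I_p}) : set ('I_p -> R) :=
  [set b | exists2 a, @lorentz_cone R p a & forall j, j \notin S -> b j = a j].

Definition omega_compl (R : realType) (p : nat) (S : {set 'I_p})
  (beta : 'I_p -> R) : R :=
  inf [set (2^-1 * \sum_(j < p | j \notin S) (beta j ^+ 2 / b j + b j))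
      | b in @cone_proj R p S].

From HB Require Import structures.
From mathcomp Require Import all_boot all_order all_algebra.
From mathcomp Require Import all_classical all_reals.
From mathcomp Require Import lra.
Import Order.TTheory GRing.Theory Num.Theory.
Local Open Scope classical_set_scope.
Local Open Scope ring_scope.

(* Both sides are compared with the l1 norm L of beta_{S^c}.  By AM-GM,
   beta_j^2/b_j + b_j >= 2|beta_j|, so Omega^{S^c} >= L.  Conversely, since
   beta_{S^c} vanishes at the cone coordinate p, the point a_j = |beta_j| + eps
   (j < p), a_p = ||(a_1, ..., a_{p-1})||_2 + eps lies in the Lorentz cone;
   there the first p-1 terms contribute about 2L and the last one a_p <= L,
   so ||beta_{S^c}||_Lo <= 3L/2. *)

Section RealInequalities.
Context {R : realType}.

Lemma two_norm_le_sqr_divD (x b : R) : 0 < b -> 2 * `|x| <= x ^+ 2 / b + b.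
Proof.
move=> b_gt0; rewrite -real_normK ?num_real //.
rewrite -[X in _ <= _ + X](mulfK (lt0r_neq0 b_gt0)) -mulrDl ler_pdivlMr //.
have := sqr_ge0 (`|x| - b); nra.
Qed.

Lemma sqr_div_normD_le (x e : R) : 0 < e -> x ^+ 2 / (`|x| + e) <= `|x|.
Proof.
move=> e_gt0; rewrite ler_pdivrMr ?ltr_wpDl // -real_normK ?num_real //.
have := normr_ge0 x; nra.
Qed.

Lemma sum_sqr_le_sqr_sum (I : finType) (P : pred I) (x : I -> R) :
  (forall i, P i -> 0 <= x i) ->
  \sum_(i | P i) x i ^+ 2 <= (\sum_(i | P i) x i) ^+ 2.
Proof.
move=> x_ge0.
suff [] : \sum_(i | P i) x i ^+ 2 <= (\sum_(i | P i) x i) ^+ 2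
          /\ 0 <= \sum_(i | P i) x i by [].
apply: (big_ind2 (fun s t => s <= t ^+ 2 /\ 0 <= t)) => [|s1 s2 t1 t2|i Pi].
- by rewrite expr0n.
- by move=> [? ?] [? ?]; split; [nra | rewrite addr_ge0].
- by rewrite x_ge0.
Qed.

Lemma sqrt_sum_sqr_le_sum (I : finType) (P : pred I) (x : I -> R) :
  (forall i, P i -> 0 <= x i) ->
  Num.sqrt (\sum_(i | P i) x i ^+ 2) <= \sum_(i | P i) x i.
Proof.
move=> x_ge0; rewrite -[leRHS]ger0_norm ?sumr_ge0 // -sqrtr_sqr.
by rewrite ler_wsqrtr // sum_sqr_le_sqr_sum.
Qed.

End RealInequalities.

Section LorentzNorm.
Context {R : realType} {p : nat}.
Implicit Types (a beta : 'I_p -> R) (S : {set 'I_p}).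

Lemma lorentz_norm_le_sum beta a : lorentz_cone a ->
  lorentz_norm beta <= 2^-1 * \sum_i (beta i ^+ 2 / a i + a i).
Proof.
move=> a_cone; apply: ge_inf; last by exists a.
exists 0 => _ [b [b_gt0 _] <-].
rewrite mulr_ge0 ?invr_ge0 // sumr_ge0 // => i _.
by rewrite addr_ge0 ?divr_ge0 ?sqr_ge0 ?ltW.
Qed.

Definition lorentz_lift a (eps : R) : 'I_p -> R := fun i =>
  if is_last i then Num.sqrt (\sum_(k | ~~ is_last k) a k ^+ 2) + eps else a i.

Lemma lorentz_lift_cone a eps : 0 < eps -> (forall i, 0 < a i) ->
  lorentz_cone (lorentz_lift a eps).
Proof.
move=> eps_gt0 a_gt0; split=> [j|j j_last]; rewrite /lorentz_lift.
  by case: ifP => _ //; rewrite ltr_wpDl ?sqrtr_ge0.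
rewrite j_last; under eq_bigr => i /negbTE -> do [].
by rewrite lerDl ltW.
Qed.

Lemma omega_compl_ge_l1 S beta :
  \sum_(j | j \notin S) `|beta j| <= omega_compl S beta.
Proof.
pose a1 := lorentz_lift (fun=> 1) 1.
have a1_cone : lorentz_cone a1 by apply: lorentz_lift_cone.
apply: lb_le_inf.
  by eexists; exists a1 => //; exists a1.
move=> _ [b [a [a_gt0 _] b_a] <-].
rewrite mulr_sumr ler_sum // => j j_notS.
have := two_norm_le_sqr_divD (beta j) _ (a_gt0 j); rewrite -b_a //; lra.
Qed.

Section LastCoordinate.
Context {j0 : 'I_p} (j0_last : is_last j0).

Lemma is_lastE i : is_last i = (i == j0).
Proof.
by rewrite /is_last -(eqP j0_last).
Qed.

Lemma lorentz_lift_last_le a eps : (forall i, 0 <= a i) ->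
  lorentz_lift a eps j0 <= \sum_(i | i != j0) a i + eps.
Proof.
move=> a_ge0; rewrite /lorentz_lift j0_last lerD2r.
under eq_bigl => i do rewrite is_lastE.
exact: sqrt_sum_sqr_le_sum.
Qed.

Lemma lorentz_norm_le_l1_eps beta eps : beta j0 = 0 -> 0 < eps ->
  lorentz_norm beta <= 3 / 2 * \sum_i `|beta i| + eps *+ p.
Proof.
move=> beta_j0 eps_gt0.
pose a := lorentz_lift (fun i => `|beta i| + eps) eps.
have a_cone : lorentz_cone a by apply: lorentz_lift_cone => // i; rewrite ltr_wpDl.
apply: le_trans (lorentz_norm_le_sum beta _ a_cone) _.
set L := \sum_(i | i != j0) `|beta i|.
set E := \sum_(i | i != j0) eps.
have L_all : \sum_i `|beta i| = L by rewrite (bigD1 j0) //= beta_j0 normr0 add0r.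
have E_all : eps *+ p = E + eps.
  by rewrite -[in LHS](card_ord p) -sumr_const (bigD1 j0) //= addrC.
have a_j0 : a j0 <= L + E + eps.
  apply: le_trans (lorentz_lift_last_le _ _ _) _ => [i|]; last by rewrite big_split.
  by rewrite addr_ge0 // ltW.
have a_other : \sum_(i | i != j0) (beta i ^+ 2 / a i + a i) <= 2 * L + E.
  rewrite mulr_sumr -big_split /= ler_sum // => i i_j0.
  have -> : a i = `|beta i| + eps by rewrite /a /lorentz_lift is_lastE (negbTE i_j0).
  have := sqr_div_normD_le (beta i) _ eps_gt0; lra.
rewrite (bigD1 j0) //= beta_j0 expr0n mul0r add0r L_all E_all.
have : 0 <= E by rewrite sumr_ge0 // => i _; rewrite ltW.
lra.
Qed.

Lemma lorentz_norm_le_l1 beta : beta j0 = 0 ->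
  lorentz_norm beta <= 3 / 2 * \sum_i `|beta i|.
Proof.
move=> beta_j0; apply/ler_addgt0Pr => e e_gt0.
have p_neq0 : p%:R != 0 :> R by rewrite pnatr_eq0 -lt0n (leq_ltn_trans _ (ltn_ord j0)).
have eps_gt0 : 0 < e / p%:R by rewrite divr_gt0 // lt0r p_neq0 /=.
by rewrite -[e](divfK p_neq0) mulr_natr lorentz_norm_le_l1_eps.
Qed.

End LastCoordinate.
End LorentzNorm.

Theorem lemma13 (R : realType) (p : nat) (hp : (2 <= p)%N) (S : {set 'I_p})
  (hS : forall j : 'I_p, is_last j -> j \in S) (beta : 'I_p -> R) :
  lorentz_norm (restrict_compl S beta)
    <= 3 / 2 * omega_compl S (restrict_compl S beta).
Proof.
have last_lt : (p.-1 < p)%N by rewrite ltn_predL ltnW.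
pose j0 := Ordinal last_lt.
have j0_last : is_last j0 by exact: eqxx.
set g := restrict_compl S beta.
have g_j0 : g j0 = 0 by rewrite /g /restrict_compl hS.
have g_l1 : \sum_i `|g i| = \sum_(i | i \notin S) `|g i|.
  rewrite [RHS]big_mkcond; apply: eq_bigr => i _.
  by rewrite /g /restrict_compl; case: (i \in S); rewrite ?normr0.
apply: le_trans (lorentz_norm_le_l1 j0_last _ g_j0) _.
rewrite ler_pM2l ?divr_gt0 // g_l1; exact: omega_compl_ge_l1.
Qed.
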